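(* Let $A$ be a finite alphabet with $|A|=k$, and let $L\subseteq A^*$ be $n$-PT. Let $m=f_k(n)$. Then ${\downarrow}L$ and ${\downarrow}_<L$ are $(k+1)(m+1)$-PT.
   Context: For words $u,v$, $u\sqsubseteq v$ (subword) means $u=a_1\cdots a_\ell$ with letters $a_i$ and $v=v_0a_1v_1\cdots a_\ell v_\ell$ for some words $v_i$; $u\sqsubset v$ means $u\sqsubseteq v$ and $u\neq v$. ${\downarrow}L=\{v~|~\exists u\in L: v\sqsubseteq u\}$ and ${\downarrow}_<L=\{v~|~\exists u\in L: v\sqsubset u\}$. For $n\in\mathbb{N}$, $u\sim_n v$ iff $u$ and $v$ have exactly the same subwords of length at most $n$; $L$ is $n$-PT if it is a union of $\sim_n$-classes. The functions $f_k$ ($k\geq1$) are defined by $f_1(n)=n$ and $f_{k+1}(n)=\max_{0\leq m\leq n}\bigl(m f_k(n+1-m)+m+f_k(n-m)\bigr)$. *)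

From mathcomp Require Import all_boot.
Set Implicit Arguments. Unset Strict Implicit. Unset Printing Implicit Defensive.

(* Words over alphabet A are [seq A]; the subword relation u ⊑ v is
   mathcomp's [subseq u v] (scattered subsequence). Languages are
   predicates [seq A -> Prop]. *)

Definition strict_subword {A : eqType} (u v : seq A) : Prop :=
  subseq u v /\ u <> v.

Definition downclosure {A : eqType} (L : seq A -> Prop) : seq A -> Prop :=
  fun v => exists u, L u /\ subseq v u.

Definition sdownclosure {A : eqType} (L : seq A -> Prop) : seq A -> Prop :=
  fun v => exists u, L u /\ strict_subword v u.

Definition simon_eq {A : eqType} (n : nat) (u v : seq A) : Prop :=
  forall w : seq A, size w <= n -> (subseq w u <-> subseq w v).

(* L is n-PT: L is a union of ~_n classes, i.e. closed under ~_n *)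
Definition nPT {A : eqType} (n : nat) (L : seq A -> Prop) : Prop :=
  forall u v : seq A, simon_eq n u v -> (L u <-> L v).

(* f_1(n) = n,
   f_{k+1}(n) = max_{0<=m<=n} (m f_k(n+1-m) + m + f_k(n-m)).
   [fk k] encodes f_k for k >= 1; the value [fk 0] is an irrelevant
   placeholder (we set f_0 = f_1). *)
Fixpoint fk (k : nat) (n : nat) : nat :=
  match k with
  | 0 => n
  | 1 => n
  | k'.+1 => \max_(m < n.+1) (m * fk k' (n.+1 - m) + m + fk k' (n - m))
  end.

From mathcomp Require Import all_boot zify.
Set Implicit Arguments. Unset Strict Implicit. Unset Printing Implicit Defensive.

(* Every word y over a k-letter alphabet factors as y = z0 a1 z1 ... am zm
   with m <= f_k(n) so that replacing each zi by any word over the letters of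
   zi does not leave the ~_n-class of y; the factorization is built along the
   arch factorization of y, by induction on the alphabet. Whether v is a
   subword of such a pumped word is decided by the subwords of v of length at
   most m + 1 (match v greedily against the pattern). Hence if u ~_(m+1) v and
   u is a subword of y in L, then v is a subword of a pumping of y, which is
   again in L. For the strict closure the pumped word can be chosen longer
   than v, unless y = a1 ... am, which is too short to be a strict superword
   of u. *)

Section Subwords.

Variable A : eqType.
Implicit Types (u v w x y p r z : seq A) (a b c d : A).

Lemma subseq_cat_split w p r :
  subseq w (p ++ r) -> exists w1 w2, [/\ w = w1 ++ w2, subseq w1 p & subseq w2 r].
Proof.
move=> /subseqP [m Hm ->].
exists (mask (take (size p) m) p), (mask (drop (size p) m) r).
rewrite -mask_cat; last by rewrite size_takel // Hm size_cat leq_addr.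
by rewrite cat_take_drop !mask_subseq.
Qed.

Lemma subseq_cons_inv c w b r :
  subseq (c :: w) (b :: r) -> (c = b /\ subseq w r) \/ subseq (c :: w) r.
Proof. by rewrite /=; case: eqP => [->|_] H; [left|right]. Qed.

Lemma subseq_cons_bound w c r : subseq w (c :: r) ->
  exists x, [/\ subseq x r, subseq w (c :: x) & size x <= size w].
Proof.
case: w => [|d w]; first by exists [::]; rewrite !sub0seq.
case/subseq_cons_inv => [[-> wr]|dwr]; first by exists w; rewrite /= eqxx.
by exists (d :: w); rewrite subseq_cons.
Qed.

Lemma all_subseq (P : pred A) w v : subseq w v -> all P v -> all P w.
Proof. by move=> /mem_subseq wv /allP Hv; apply/allP => x /wv /Hv. Qed.

Lemma simon_sym n u v : simon_eq n u v -> simon_eq n v u.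
Proof. by move=> H w wn; split => /(H w wn). Qed.

Lemma simon_le n N u v : n <= N -> simon_eq N u v -> simon_eq n u v.
Proof. by move=> nN H w wn; apply: H; apply: leq_trans nN. Qed.

Lemma simon0 u v : simon_eq 0 u v.
Proof. by move=> [|c w] //; rewrite !sub0seq. Qed.

Lemma simon_sub n u v w : simon_eq n u v -> size w <= n -> subseq w u -> subseq w v.
Proof. by move=> H wn; apply H. Qed.

Lemma simon_mem n u v c : simon_eq n.+1 u v -> c \in u -> c \in v.
Proof. by move=> H; rewrite -!sub1seq; apply H. Qed.

Lemma simon_cons n b u v : simon_eq n u v -> simon_eq n (b :: u) (b :: v).
Proof.
move=> H w wn.
have cons_sub u' v' : simon_eq n u' v' -> subseq w (b :: u') -> subseq w (b :: v').
  move=> H'; case: w wn => [|c w] wn; rewrite ?sub0seq //=.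
  by case: eqP => _; apply: simon_sub H' _; first exact: ltnW.
by split; apply: cons_sub => //; apply: simon_sym.
Qed.

(* [(z0, [:: (a1, z1); ...; (am, zm)])] encodes the factorization
   z0 a1 z1 ... am zm; its pumpings replace each zi by an arbitrary word over
   the letters of zi. *)
Fixpoint dec_word z0 (D : seq (A * seq A)) : seq A :=
  if D is (a, z) :: D' then z0 ++ a :: dec_word z D' else z0.

Fixpoint pumping z0 (D : seq (A * seq A)) y : Prop :=
  if D is (a, z) :: D' then
    exists p r, [/\ y = p ++ a :: r, all (mem z0) p & pumping z D' r]
  else all (mem z0) y.

Lemma pumping_word z0 D : pumping z0 D (dec_word z0 D).
Proof.
elim: D z0 => [|[a z] D IH] z0 /=; first exact/allP.
by exists z0, (dec_word z D); split => //; apply/allP.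
Qed.

Lemma pumping_cons c z0 D y : c \in z0 -> pumping z0 D y -> pumping z0 D (c :: y).
Proof.
case: D => [|[a z] D] /= cz0; first by rewrite cz0.
by move=> [p [r [-> pz0 Pr]]]; exists (c :: p), r; rewrite /= cz0.
Qed.

Lemma pumping_all (P : pred A) z0 D y :
  pumping z0 D y -> all P (dec_word z0 D) -> all P y.
Proof.
elim: D z0 y => [|[a z] D IH] z0 y /=.
  by move=> /allP yz0 /allP Pz0; apply/allP => x /yz0 /Pz0.
move=> [p [r [-> /allP pz0 Pr]]]; rewrite !all_cat /= => /and3P [/allP Pz0 Pa PD].
by apply/and3P; split; [apply/allP => x /pz0 /Pz0 | | exact: IH Pr PD].
Qed.

Lemma dec_word_cat z0 D b z E :
  dec_word z0 (D ++ (b, z) :: E) = dec_word z0 D ++ b :: dec_word z E.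
Proof. by elim: D z0 => [|[a z1] D IH] z0 //=; rewrite IH -catA. Qed.

Lemma pumping_cat z0 D b z E y : pumping z0 (D ++ (b, z) :: E) y ->
  exists y1 y2, [/\ y = y1 ++ b :: y2, pumping z0 D y1 & pumping z E y2].
Proof.
elim: D z0 y => [|[a z1] D IH] z0 y /=; first by move=> [p [r [-> *]]]; exists p, r.
move=> [p [r [-> pz0 /IH [y1 [y2 [-> P1 P2]]]]]].
by exists (p ++ a :: y1), y2; split; [rewrite -catA | exists p, y1 |].
Qed.

Lemma split_alph_prefix z0 v : exists p r,
  [/\ v = p ++ r, all (mem z0) p & forall c r', r = c :: r' -> c \notin z0].
Proof.
elim: v => [|c v [p [r [-> pz0 Hr]]]]; first by exists [::], [::].
have [cz0|cz0] := boolP (c \in z0); first by exists (c :: p), r; rewrite /= cz0.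
by exists [::], (c :: p ++ r); split => // c' r' [<- _].
Qed.

Lemma subseq_pumping_head c x z0 p a y :
  c \notin z0 -> all (mem z0) p -> subseq (c :: x) (p ++ a :: y) ->
  (c = a /\ subseq x y) \/ subseq (c :: x) y.
Proof.
move=> cz0 pz0 /subseq_cat_split [[|d w1] [w2 [/= Ew w1p w2y]]].
  by move: w2y; rewrite -Ew; apply: subseq_cons_inv.
case: Ew w1p => <- _ /mem_subseq/(_ c (mem_head _ _)) cp.
by case/negP: cz0; exact: allP pz0 c cp.
Qed.

(* v is matched greedily: its maximal prefix over the letters of z0 first. *)
Lemma pumping_test z0 D v :
  (forall w, subseq w v -> size w <= (size D).+1 ->
     exists2 y, pumping z0 D y & subseq w y) ->
  exists2 y, pumping z0 D y & subseq v y.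
Proof.
elim: D z0 v => [|[a z] D IH] z0 v /= Hv.
  exists v => //; apply/allP => c cv.
  have cv' : subseq [:: c] v by rewrite sub1seq.
  have [y /allP yz0] := Hv _ cv' erefl.
  by rewrite sub1seq => /yz0.
have [p [r [Ev pz0 Hr]]] := split_alph_prefix z0 v; subst v.
case: r Hr Hv => [_|c r /(_ c r erefl) cz0] Hv.
  exists (p ++ a :: dec_word z D); last by rewrite cats0 prefix_subseq.
  by exists p, (dec_word z D); split => //; apply: pumping_word.
have peel x : subseq x r -> size x <= (size D).+1 ->
    exists2 y1, pumping z D y1 & (c = a /\ subseq x y1) \/ subseq (c :: x) y1.
  move=> xr xD; have cxv : subseq (c :: x) (p ++ c :: r).
    by apply: subseq_trans (suffix_subseq p _); rewrite /= eqxx.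
  have [y [p0 [y1 [-> p0z0 Py1]]] cxy] := Hv _ cxv xD.
  by exists y1 => //; exact: subseq_pumping_head cz0 p0z0 cxy.
have [Eca|Nca] := eqVneq c a.
  subst a; have [y1 Py1 ry1] : exists2 y1, pumping z D y1 & subseq r y1.
    apply: IH => w wr wD; have [y1 Py1 [[_ wy1]|cwy1]] := peel w wr wD.
      by exists y1.
    by exists y1 => //; apply: cons_subseq cwy1.
  exists (p ++ c :: y1); first by exists p, y1.
  by rewrite subseq_cat2l /= eqxx.
have [y1 Py1 ry1] : exists2 y1, pumping z D y1 & subseq (c :: r) y1.
  apply: IH => w wr wD; have [x [xr wx xw]] := subseq_cons_bound wr.
  have [y1 Py1 [[Eca _]|cxy1]] := peel x xr (leq_trans xw wD).
    by rewrite Eca eqxx in Nca.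
  by exists y1 => //; apply: subseq_trans wx cxy1.
exists (p ++ a :: y1); first by exists p, y1.
by rewrite subseq_cat2l; apply: subseq_trans ry1 (subseq_cons _ _).
Qed.

Lemma pumping_simon z0 D u v :
  subseq u (dec_word z0 D) -> simon_eq (size D).+1 u v ->
  exists2 y, pumping z0 D y & subseq v y.
Proof.
move=> uD Huv; apply: pumping_test => w wv wD.
exists (dec_word z0 D); first exact: pumping_word.
by apply: subseq_trans uD; apply: simon_sub (simon_sym Huv) wD wv.
Qed.

Lemma pumping_rigid_or_grow z0 D y : pumping z0 D y ->
  (y = dec_word z0 D /\ size y = size D) \/
  exists2 y', pumping z0 D y' & subseq y y' /\ size y < size y'.
Proof.
case: z0 => [|c z0] Py; last first.
  right; exists (c :: y); first by apply: pumping_cons (mem_head _ _) Py.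
  by split; [apply: subseq_cons|].
elim: D y Py => [|[a z] D IH] y /=; first by case: y => [_|//]; left.
move=> [p [r [-> pz0 Pr]]]; case: p pz0 => // _ /=.
case: z Pr IH => [|c z] Pr IH /=.
  case: (IH _ Pr) => [[-> ->]|[r' Pr' [rr' rlt]]]; [by left|right].
  exists (a :: r'); first by exists [::], r'.
  by rewrite /= eqxx.
right; exists (a :: c :: r).
  by exists [::], (c :: r); split => //; exact: pumping_cons (mem_head _ _) Pr.
by rewrite /= eqxx; split; [apply: subseq_cons|].
Qed.

Definition stable_factorization n m y := exists z0 D,
  [/\ dec_word z0 D = y, size D <= m & forall y', pumping z0 D y' -> simon_eq n y' y].

Lemma stable_factorization_le n m m' y :
  m <= m' -> stable_factorization n m y -> stable_factorization n m' y.
Proof. by move=> mm' [z0 [D [Ey Dm HD]]]; exists z0, D; split => //; apply: leq_trans mm'. Qed.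

Lemma stable_factorization0 m y : stable_factorization 0 m y.
Proof. by exists y, [::]; split => // y' _; apply: simon0. Qed.

Lemma downclosure_simon (L : seq A -> Prop) n m u v :
  nPT n L -> (forall y, L y -> stable_factorization n m y) -> simon_eq m.+1 u v ->
  downclosure L u -> downclosure L v.
Proof.
move=> HL Hdec Huv [y [Ly uy]].
have [z0 [D [Ey Dm HD]]] := Hdec y Ly.
have uD : subseq u (dec_word z0 D) by rewrite Ey.
have [y' Py' vy'] := pumping_simon uD (simon_le (Dm : (size D).+1 <= m.+1) Huv).
by exists y'; split => //; apply/(HL _ _ (HD _ Py')).
Qed.

Lemma sdownclosure_simon (L : seq A -> Prop) n m u v :
  nPT n L -> (forall y, L y -> stable_factorization n m y) -> simon_eq m.+1 u v ->
  sdownclosure L u -> sdownclosure L v.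
Proof.
move=> HL Hdec Huv [y [Ly [uy uNy]]].
have [z0 [D [Ey Dm HD]]] := Hdec y Ly.
have uD : subseq u (dec_word z0 D) by rewrite Ey.
have [y' Py' vy'] := pumping_simon uD (simon_le (Dm : (size D).+1 <= m.+1) Huv).
have [[Ey' y'D]|[y'' Py'' [y'y'' y'lt]]] := pumping_rigid_or_grow Py'.
  rewrite Ey' Ey in vy' y'D; exists y; split => //; split => // Evy.
  apply: uNy; apply: subseq_anti; rewrite uy /=.
  by apply: simon_sub (simon_sym Huv) _ _; rewrite ?Evy // y'D; apply: leqW.
exists y''; split; first by apply/(HL _ _ (HD _ Py'')).
split=> [|Evy]; first exact: subseq_trans vy' y'y''.
by move: (size_subseq vy'); rewrite Evy leqNgt y'lt.
Qed.

Lemma nPT_of_simon (P : seq A -> Prop) n N :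
  n <= N -> (forall u v, simon_eq n u v -> P u -> P v) -> nPT N P.
Proof. by move=> nN HP u v /(simon_le nN) Huv; split; apply: HP => //; apply: simon_sym. Qed.

End Subwords.

Section Arches.

Variable A : finType.
Implicit Types (S : {set A}) (u v w x y al be : seq A) (b c d : A).

Definition universal S j x :=
  forall w, all (mem S) w -> size w <= j -> subseq w x.

(* [al ++ [:: b]] contains every letter of S, and no proper prefix of it does. *)
Definition arch S al b :=
  [/\ b \in S, all (mem S) al, b \notin al & forall c, c \in S -> c != b -> c \in al].

Fixpoint arch_word (s : seq (seq A * A)) be : seq A :=
  if s is (al, b) :: s' then al ++ b :: arch_word s' be else be.

Lemma universal_simon S j n x y :
  j <= n -> simon_eq n x y -> universal S j x -> universal S j y.
Proof. by move=> jn Hxy Hx w wS wj; apply: simon_sub Hxy (leq_trans wj jn) (Hx w wS wj). Qed.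

Lemma arch_word_universal S s be :
  (forall p, p \in s -> arch S p.1 p.2) -> universal S (size s) (arch_word s be).
Proof.
elim: s => [|[al b] s IH] Hs [|c w] //=; rewrite ?sub0seq // => /andP [cS wS].
rewrite ltnS => ws.
have [_ _ _ Hcov] := Hs _ (mem_head _ _).
rewrite -cat1s -[al ++ _]/(al ++ [:: b] ++ arch_word s be) catA; apply: cat_subseq.
  by rewrite sub1seq mem_cat inE; case: (eqVneq c b) => [_|cb]; rewrite ?orbT ?Hcov.
by apply: IH => // p ps; apply: Hs; rewrite inE ps orbT.
Qed.

Lemma subseq_arch_suffix S b al' x y n w :
  all (mem S) w -> (forall c, c \in S -> c != b -> c \in al') -> simon_eq n x y ->
  subseq w (b :: x) -> size w <= n.+1 -> subseq w (al' ++ b :: y).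
Proof.
case: w => [|d w]; rewrite ?sub0seq //= => /andP [dS _] Hcov Hxy dwx.
rewrite ltnS => wn; have wy : subseq w y.
  by apply: simon_sub Hxy wn _; case/subseq_cons_inv: dwx => [[_ //]|/cons_subseq].
have [->|db] := eqVneq d b.
  by apply: subseq_trans (suffix_subseq al' _); rewrite /= eqxx.
rewrite -cat1s; apply: cat_subseq; first by rewrite sub1seq Hcov.
exact: subseq_trans wy (subseq_cons _ _).
Qed.

Lemma subseq_arch S b al al' x y t j w :
  all (mem S) w -> (forall c, c \in S -> c != b -> c \in al') ->
  simon_eq t.+1 al al' -> simon_eq (t + j) x y -> universal S j y ->
  subseq w (al ++ b :: x) -> size w <= (t + j).+1 -> subseq w (al' ++ b :: y).
Proof.
move=> wS Hcov Hal Hxy Hy wx wn.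
have [w1 [w2 [Ew w1al w2x]]] := subseq_cat_split wx.
have w12n : size w1 + size w2 <= (t + j).+1 by rewrite -size_cat -Ew.
have [w1t|w1t] := ltnP t.+1 (size w1).
  (* the first t + 1 letters of w1 embed into al', the rest is short *)
  rewrite Ew -(cat_take_drop t.+1 w1) -catA; apply: cat_subseq.
    apply: simon_sub Hal _ (subseq_trans (take_subseq _ _) w1al).
    by rewrite size_take w1t.
  apply: subseq_trans (subseq_cons _ b); apply: Hy.
    by apply: all_subseq wS; rewrite Ew -{2}(cat_take_drop t.+1 w1) -catA suffix_subseq.
  by rewrite size_cat size_drop; move: w12n w1t; move: (size w1) (size w2) => n1 n2; lia.
have [w2n|w2n] := leqP (size w2) (t + j).
  rewrite Ew; apply: cat_subseq; first exact: simon_sub Hal w1t w1al.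
  exact: simon_sub (simon_cons b Hxy) w2n w2x.
have w10 : w1 = [::].
  by apply: size0nil; move: w12n w2n; move: (size w1) (size w2) => n1 n2; lia.
rewrite w10 /= in Ew; rewrite Ew in wS *.
by apply: subseq_arch_suffix wS Hcov Hxy w2x _; rewrite -Ew.
Qed.

Lemma simon_eq_arch S b al al' x y t j :
  all (mem S) (al ++ b :: x) -> all (mem S) (al' ++ b :: y) ->
  (forall c, c \in S -> c != b -> c \in al) ->
  simon_eq t.+1 al al' -> simon_eq (t + j) x y -> universal S j x ->
  simon_eq (t + j).+1 (al ++ b :: x) (al' ++ b :: y).
Proof.
move=> alS al'S Hcov Hal Hxy Hx w wn.
have Hcov' c : c \in S -> c != b -> c \in al' by move=> cS cb; apply: simon_mem Hal (Hcov c cS cb).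
have Hy := universal_simon (leq_addl t j) Hxy Hx.
split => Hw.
  exact: subseq_arch (all_subseq Hw alS) Hcov' Hal Hxy Hy Hw wn.
exact: subseq_arch (all_subseq Hw al'S) Hcov (simon_sym Hal) (simon_sym Hxy) Hx Hw wn.
Qed.

Lemma arch_split S y : S != set0 -> {subset S <= y} ->
  exists al b y', [/\ y = al ++ b :: y', b \in S, b \notin al &
    forall c, c \in S -> c != b -> c \in al].
Proof.
elim: y S => [|d y IH] S S0 Sy; first by case/set0Pn: S0 => c /Sy.
have [Sd0|Sd0] := eqVneq (S :\ d) set0.
  have Sd c : c \in S -> c != d -> false.
    move=> cS cd; suff : c \in S :\ d by rewrite Sd0 in_set0.
    by rewrite in_setD1 cd cS.
  exists [::], d, y; split => //.
  by case/set0Pn: S0 => c cS; have [<-|/(Sd c cS)] := eqVneq c d.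
have Sdy : {subset S :\ d <= y}.
  by move=> c; rewrite in_setD1 => /andP [cd /Sy]; rewrite inE (negbTE cd).
have [al [b [y' [-> bSd bal Hcov]]]] := IH _ Sd0 Sdy.
move: bSd; rewrite in_setD1 => /andP [bd bS].
exists (d :: al), b, y'; split => //; first by rewrite inE negb_or bd.
move=> c cS cb; rewrite inE; have [//|cd] := eqVneq c d.
by rewrite Hcov // in_setD1 cd.
Qed.

Lemma arch_factorization S M y : S != set0 -> all (mem S) y ->
  exists s be, [/\ y = arch_word s be, size s <= M,
    forall p, p \in s -> arch S p.1 p.2, all (mem S) be &
    size s = M \/ exists2 c, c \in S & c \notin be].
Proof.
move=> S0; elim: M y => [|M IH] y yS; first by exists [::], y; split => //; left.
have [Sy|] := boolP [forall c in S, c \in y]; last first.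
  by move/forall_inPn => [c cS cy]; exists [::], y; split => //; right; exists c.
have [al [b [y' [Ey bS bal Hcov]]]] := arch_split S0 (fun c => forall_inP Sy c).
move: yS; rewrite Ey all_cat /= => /and3P [alS _ y'S].
have [s [be [-> sM Hs beS HM]]] := IH _ y'S.
exists ((al, b) :: s), be; split => //.
- by move=> p; rewrite inE => /predU1P [-> //|/Hs].
- by case: HM => [<-|]; [left|right].
Qed.

Lemma all_setD1 S b al : all (mem S) al -> b \notin al -> all (mem (S :\ b)) al.
Proof.
move=> /allP alS bal; apply/allP => c cal; rewrite /= in_setD1.
by rewrite [c \in S](alS c cal) andbT; apply: contraNneq bal => <-.
Qed.

Lemma stable_factorization_arch_word S t m1 m2 s be :
  (forall p, p \in s -> arch S p.1 p.2 /\ stable_factorization t.+1 m1 p.1) ->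
  all (mem S) (arch_word s be) -> stable_factorization t m2 be ->
  stable_factorization (t + size s) (size s * m1 + size s + m2) (arch_word s be).
Proof.
move=> + + Hbe; elim: s => [|[al b] s IH] Hs /= sS; first by rewrite addn0.
have /= [[bS alS _ Hcov] [z0 [D [Eal Dm Pal]]]] := Hs _ (mem_head _ _).
have Hs' p : p \in s -> arch S p.1 p.2 /\ stable_factorization t.+1 m1 p.1.
  by move=> ps; apply: Hs; rewrite inE ps orbT.
have yS : all (mem S) (arch_word s be) by move: sS; rewrite all_cat /= => /and3P [].
have [z1 [D1 [E1 D1m P1]]] := IH Hs' yS.
exists z0, (D ++ (b, z1) :: D1); split.
- by rewrite dec_word_cat Eal E1.
- rewrite size_cat /= mulSn; move: Dm D1m.
  by move: (size D) (size D1) (size s * m1) (size s) => n1 n2 sm1 ns; lia.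
move=> y Py; have y'S : all (mem S) y.
  by apply: pumping_all Py _; rewrite dec_word_cat Eal E1.
have [y1 [y2 [Ey Py1 Py2]]] := pumping_cat Py.
rewrite Ey addnS in y'S *; apply: simon_sym.
apply: simon_eq_arch sS y'S Hcov _ _ (arch_word_universal _ _).
- by apply: simon_sym; apply: Pal.
- by apply: simon_sym; apply: P1.
- by move=> p /Hs' [].
Qed.

(* [f_k] with the value [f_0 = 0] of the empty alphabet, for which the
   recursion defining [fk] also holds at k = 0. *)
Definition fbound k n := if k is 0 then 0 else fk k n.

Lemma fbound_rec k n m :
  m <= n -> m * fbound k (n - m).+1 + m + fbound k (n - m) <= fbound k.+1 n.
Proof.
case: k => [|k] mn /=; first by rewrite muln0 addn0.
have := @leq_bigmax _ (fun i : 'I_n.+1 => i * fk k.+1 (n.+1 - i) + i + fk k.+1 (n - i))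
  (Ordinal (mn : m < n.+1)).
by rewrite /= subSn.
Qed.

Lemma stable_factorization_set0 n m y :
  all (mem (set0 : {set A})) y -> stable_factorization n m y.
Proof.
case: y => [_|c y] /=; last by rewrite inE.
by exists [::], [::]; split => // y' /=; case: y'.
Qed.

Lemma stable_factorization_exists k S n y :
  #|S| <= k -> all (mem S) y -> stable_factorization n (fbound k n) y.
Proof.
elim: k S n y => [|k IH] S n y Sk yS.
  by move: Sk yS; rewrite leqn0 cards_eq0 => /eqP ->; apply: stable_factorization_set0.
have [S0|S0] := eqVneq S set0; first by rewrite S0 in yS; apply: stable_factorization_set0.
have Sb b : b \in S -> #|S :\ b| <= k by move=> bS; rewrite (cardsD1 b S) bS in Sk.
have [s [be [Ey sn Hs beS Hn]]] := arch_factorization n S0 yS.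
apply: stable_factorization_le (fbound_rec k sn) _.
rewrite -[in stable_factorization n](subnK sn) Ey.
apply: (stable_factorization_arch_word (S := S)).
- move=> p /Hs [bS alS bal Hcov]; split=> //.
  exact: IH (Sb _ bS) (all_setD1 alS bal).
- by rewrite -Ey.
- case: Hn => [<-|[c cS cbe]]; first by rewrite subnn; apply: stable_factorization0.
  exact: IH (Sb _ cS) (all_setD1 beS cbe).
Qed.

End Arches.

Theorem theorem15 (A : finType) (k n : nat) (L : seq A -> Prop) :
  0 < k -> #|A| = k -> nPT n L ->
  let m := fk k n in
  nPT ((k + 1) * (m + 1)) (downclosure L) /\
  nPT ((k + 1) * (m + 1)) (sdownclosure L).
Proof.
move=> k_gt0 cardA HL m.
have Hdec y : L y -> stable_factorization n m y.
  move=> _; have -> : m = fbound k n by rewrite /m /fbound; case: k k_gt0 {cardA m}.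
  apply: (stable_factorization_exists (S := [set: A])); first by rewrite cardsT cardA.
  by apply/allP => c; rewrite inE.
have mN : m < (k + 1) * (m + 1) by rewrite !addn1 leq_pmull.
split; apply: nPT_of_simon mN _ => u v Huv.
- exact: downclosure_simon HL Hdec Huv.
- exact: sdownclosure_simon HL Hdec Huv.
Qed.
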